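(* Suppose all populations share the same finite strategy set $S\subset[0,1]$, with minimum $s_{\min}$ and maximum $s_{\max}$, and assume $\frac{\lambda d(1-s)}{\gamma}\ge1$ for all $s\in S$ and all $d\in\{1,\dots,D\}$. For $d\in\{1,\dots,D\}$, $\Theta\in[0,1]$ and $s\in[s_{\min},s_{\max}]$ define $$\mathcal{F}^d(s;\Theta)=s\,r-(1-s)\frac{\lambda d(1-s)\Theta}{\gamma+\lambda d(1-s)\Theta}.$$ If $$|r|\ge 1-\frac{1}{\bigl(1+\frac{\lambda d(1-s_{\min})}{\gamma}\bigr)^2}\qquad\text{for all } d\in\{1,\dots,D\},$$ then $s_{\min}$ is a dominant strategy for every population: for all $d$, all $\Theta\in[0,1]$ and all $s\in[s_{\min},s_{\max}]$, $\mathcal{F}^d(s_{\min};\Theta)\ge\mathcal{F}^d(s;\Theta)$.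
   Context: Constants: $\lambda>0$ (contagion rate), $\gamma>0$ (recovery rate), relative reward $r<0$, degrees $d\in\{1,\dots,D\}$. $\mathcal{F}^d(s;\Theta)$ is the (continuous extension of the) payoff of a degree-$d$ player choosing social-inactivity level $s$ when the broadcast link-infection probability is $\Theta$, the perceived infection probability being the steady-state value $\frac{\lambda d(1-s)\Theta}{\gamma+\lambda d(1-s)\Theta}$. *)

From Stdlib Require Import Reals List.
Open Scope R_scope.

Definition payoffF (lambda gamma r : R) (d : nat) (s Theta : R) : R :=
  s * r - (1 - s) * (lambda * INR d * (1 - s) * Theta
                      / (gamma + lambda * INR d * (1 - s) * Theta)).

(* Write x = 1 - s for the activity level and p = lambda d Theta >= 0.  The
   payoff then splits as  F^d(s;Theta) = s r - cost p x,  where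
   cost p x = p x^2 / (gamma + p x)  is the expected infection cost.  The
   function x |-> cost p x is convex with derivative 1 - gamma^2/(gamma+p x)^2,
   so for 0 <= x <= x0 the secant slope (cost p x0 - cost p x)/(x0 - x) is at
   most 1 - gamma^2/(gamma + p x0)^2 ([cost_secant_bound]).  That slope grows
   with p ([tangent_slope_mono_p]); since p <= lambda d it is bounded by
   1 - 1/(1 + lambda d (1 - s_min)/gamma)^2 <= |r| = -r.  Taking x0 = 1 - s_min,
   the gain (x0 - x)(-r) in the term s r of moving from s to s_min outweighs the
   extra infection cost, which is the claim. *)

From Stdlib Require Import Reals List Lra Lia.
Open Scope R_scope.

Definition cost (gamma p x : R) : R := p * x ^ 2 / (gamma + p * x).

Lemma payoffF_cost (lambda gamma r : R) (d : nat) (s Theta : R) :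
  payoffF lambda gamma r d s Theta
  = s * r - cost gamma (lambda * INR d * Theta) (1 - s).
Proof.
  unfold payoffF, cost, Rdiv.
  replace (gamma + lambda * INR d * Theta * (1 - s))
    with (gamma + lambda * INR d * (1 - s) * Theta) by ring.
  ring.
Qed.

(* Convexity of the cost in x: the secant slope on [x, x0] is bounded by the
   derivative 1 - gamma^2/(gamma + p x0)^2 at the right endpoint. *)
Lemma cost_secant_bound (gamma p x x0 : R) :
  0 < gamma -> 0 <= p -> 0 <= x <= x0 ->
  cost gamma p x0 - cost gamma p x
  <= (x0 - x) * (1 - gamma ^ 2 / (gamma + p * x0) ^ 2).
Proof.
  intros Hg Hp Hx.
  set (u := gamma + p * x0); set (v := gamma + p * x).
  assert (Hu : 0 < u) by (unfold u; nra).
  assert (Hv : 0 < v) by (unfold v; nra).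
  (* The gap between the tangent bound and the secant is an explicit square. *)
  assert (Hgap : (x0 - x) * (1 - gamma ^ 2 / u ^ 2)
                 - (cost gamma p x0 - cost gamma p x)
                 = p * gamma ^ 2 * (x0 - x) ^ 2 / (u ^ 2 * v)).
  { unfold cost; fold u v; unfold u, v; field; fold u v; lra. }
  assert (Hnonneg : 0 <= p * gamma ^ 2 * (x0 - x) ^ 2 / (u ^ 2 * v)).
  { apply Rmult_le_pos.
    - apply Rmult_le_pos; [apply Rmult_le_pos; [lra | apply pow2_ge_0] | apply pow2_ge_0].
    - apply Rlt_le, Rinv_0_lt_compat, Rmult_lt_0_compat; [apply pow_lt |]; lra. }
  fold u; lra.
Qed.

Lemma tangent_slope_mono_p (gamma p q x0 : R) :
  0 < gamma -> 0 <= p <= q -> 0 <= x0 ->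
  1 - gamma ^ 2 / (gamma + p * x0) ^ 2 <= 1 - gamma ^ 2 / (gamma + q * x0) ^ 2.
Proof.
  intros Hg Hpq Hx0.
  assert (Hsq : (gamma + p * x0) ^ 2 <= (gamma + q * x0) ^ 2).
  { apply pow_incr; split; nra. }
  assert (Hinv : / (gamma + q * x0) ^ 2 <= / (gamma + p * x0) ^ 2).
  { apply Rinv_le_contravar; [apply pow_lt; nra | exact Hsq]. }
  unfold Rdiv.
  assert (0 < gamma ^ 2) by (apply pow_lt; lra).
  nra.
Qed.

(* The bound of the theorem, 1 - 1/(1 + a/gamma)^2, is the tangent slope. *)
Lemma threshold_as_slope (gamma a : R) :
  0 < gamma -> 0 <= a ->
  1 - 1 / (1 + a / gamma) ^ 2 = 1 - gamma ^ 2 / (gamma + a) ^ 2.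
Proof. intros Hg Ha; field; lra. Qed.

Theorem theorem5 (lambda gamma r : R) (D : nat) (S : list R) (smin smax : R) :
  0 < lambda -> 0 < gamma -> r < 0 ->
  (forall s, In s S -> 0 <= s <= 1) ->
  In smin S -> In smax S ->
  (forall s, In s S -> smin <= s <= smax) ->
  (forall s (d : nat), In s S -> (1 <= d <= D)%nat ->
      lambda * INR d * (1 - s) / gamma >= 1) ->
  (forall d : nat, (1 <= d <= D)%nat ->
      Rabs r >= 1 - 1 / (1 + lambda * INR d * (1 - smin) / gamma) ^ 2) ->
  forall (d : nat) (Theta s : R), (1 <= d <= D)%nat ->
    0 <= Theta <= 1 -> smin <= s <= smax ->
    payoffF lambda gamma r d smin Theta >= payoffF lambda gamma r d s Theta.
Proof.
  intros Hl Hg Hr HS _ Hmax _ _ Habs d Theta s Hd HT Hs.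
  pose proof (HS smax Hmax) as Hsmax.
  assert (HL : 0 < lambda * INR d)
    by (apply Rmult_lt_0_compat; [lra | apply lt_0_INR; lia]).
  set (L := lambda * INR d) in *.
  assert (Hp : 0 <= L * Theta <= L).
  { split; [apply Rmult_le_pos; lra |].
    rewrite <- (Rmult_1_r L) at 2; apply Rmult_le_compat_l; lra. }
  assert (Hx : 0 <= 1 - s <= 1 - smin) by lra.
  assert (Hr_slope : 1 - gamma ^ 2 / (gamma + L * (1 - smin)) ^ 2 <= - r).
  { pose proof (Habs d Hd) as Hb; fold L in Hb.
    rewrite Rabs_left in Hb by lra.
    rewrite threshold_as_slope in Hb; [lra | lra | apply Rmult_le_pos; lra]. }
  pose proof (cost_secant_bound gamma (L * Theta) (1 - s) (1 - smin) Hg (proj1 Hp) Hx)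
    as Hsecant.
  pose proof (tangent_slope_mono_p gamma (L * Theta) L (1 - smin) Hg Hp ltac:(lra))
    as Hmono.
  rewrite !payoffF_cost; fold L.
  assert (Hgain : (1 - smin - (1 - s)) * (1 - gamma ^ 2 / (gamma + L * (1 - smin)) ^ 2)
                  <= (1 - smin - (1 - s)) * - r) by nra.
  nra.
Qed.
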